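(* For every $n\in\mathbb{N}$, \[ \mathcal{M}^{(4)}(n)=\min_{1\le s\le t\le n}\mathcal{M}^{(4)}(n,s,t)=\Bigl\lfloor\frac{n^2-28n+245}{216}\Bigr\rfloor-\begin{cases}1,& n \bmod 108\in I,\\ 0,&\text{otherwise},\end{cases} \] where $I=\{0,1,27,28,43,47,48,53,58,63,67,68,69,73,78,83,88,89,93\}$.
   Context: For real $a>0$ and integers $1\le s\le t\le n$, $\mathcal{M}^{(a)}(n,s,t)$ is the number of ordered triples $T=(x,y,x+\lfloor ay\rfloor)\in\{1,\dots,n\}^3$ such that $T\in(\{1,\dots,s\}\cup\{t+1,\dots,n\})^3$ or $T\in\{s+1,\dots,t\}^3$ (monochromatic generalized Schur triples under the coloring $R^sB^{t-s}R^{n-t}$). For $a=4$ the triples are $(x,y,x+4y)$. *)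

From mathcomp Require Import all_boot.
Set Implicit Arguments. Unset Strict Implicit. Unset Printing Implicit Defensive.

(* Coloring R^s B^(t-s) R^(n-t) of {1..n}: i is red iff i <= s or t < i,
   blue iff s < i <= t. *)
Definition red (s t i : nat) : bool := (i <= s) || (t < i).
Definition blue (s t i : nat) : bool := (s < i) && (i <= t).

Definition mono (s t x y z : nat) : bool :=
  [&& red s t x, red s t y & red s t z] || [&& blue s t x, blue s t y & blue s t z].

(* M^(a)(n,s,t) for a natural number a (so floor(a*y) = a*y):
   the number of ordered triples (x, y, x + a*y) in {1..n}^3 that are
   monochromatic.  Since the third coordinate is determined by (x,y),
   we count the pairs (x,y). *)
Definition Mnst (a n s t : nat) : nat :=
  \sum_(1 <= x < n.+1) \sum_(1 <= y < n.+1)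
     ((x + a * y <= n) && mono s t x y (x + a * y)).

(* M^(a)(n) = min over 1 <= s <= t <= n of M^(a)(n,s,t)
   (meaningful for n >= 1; the initial value Mnst a n 1 1 is itself one of
   the minimized values). *)
Definition Mmin (a n : nat) : nat :=
  \big[minn/Mnst a n 1 1]_(1 <= s < n.+1) \big[minn/Mnst a n 1 1]_(s <= t < n.+1)
     Mnst a n s t.

Definition I_exc : seq nat :=
  [:: 0; 1; 27; 28; 43; 47; 48; 53; 58; 63; 67; 68; 69; 73; 78; 83; 88; 89; 93].

From Stdlib Require Import ZArith.
From mathcomp Require Import all_boot zify.
Set Implicit Arguments. Unset Strict Implicit. Unset Printing Implicit Defensive.

(* Let T(m) be the number of pairs (x, y) of positive integers with x + 4y <= m,
   so that 8 T(m) = m^2 - 4m + 4 - d(m) with d(m) in {0, 1, 4}.  For s <= t, four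
   disjoint families of monochromatic triples give
     M(n,s,t) >= T(s) + T(t-5s) + T(n-t) - T(n-t-4s) + T(n-5t),
   and when 5s <= t and n < 4t + 5 three families cover all of them, so
     M(n,s,t) <= T(s) + T(t-5s) + T(n-t).
   With a = s, b = t - 5s, c = n - t one compares T(a) + T(b) + T(c) with the
   claimed value f(5a + b + c); both grow by n + 40 when (a, b, c) moves by
   (20, 4, 4).  Since
     27 (a^2 + b^2 + c^2 - 4(a + b + c) + 12) - (n^2 - 28n + 245)
       = (5b - a - 8)^2 + (5c - a - 8)^2 + (b - c)^2 - 49,
   f(n) <= T(a) + T(b) + T(c) is automatic unless 5b and 5c are within 19 of
   a + 8, and there periodicity leaves a finite computation.  When c > 4a + 4
   the extra terms of the lower bound are handled by a direct quadratic estimate.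
   Equality is attained by triples found by a finite search for 5 <= n < 113,
   moved along the period. *)

Lemma sum_nat_widen0 (F : nat -> nat) m n1 n2 : n1 <= n2 ->
  (forall i, n1 <= i < n2 -> F i = 0) ->
  \sum_(m <= i < n1) F i = \sum_(m <= i < n2) F i.
Proof.
move=> le_n12 F0; case: (leqP m n1) => [le_mn1 | lt_n1m].
  rewrite (@big_cat_nat _ _ _ n1 m n2 _ _ le_mn1 le_n12) /=.
  by rewrite [X in _ + X]big_nat_cond [X in _ + X]big1 ?addn0 // => i /andP[/F0].
rewrite big_geq ?(ltnW lt_n1m) // big_nat_cond big1 // => i /andP[/andP[le_mi lt_in2] _].
by apply: F0; rewrite lt_in2 andbT (leq_trans (ltnW lt_n1m)).
Qed.

Lemma sum_interval_indicator lo k hi N :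
  \sum_(1 <= x < N.+1) ((lo < x) && (x + k <= hi)) = minn (hi - k) N - lo.
Proof.
elim: N => [|N IH]; first by rewrite big_geq //; lia.
by rewrite big_nat_recr //= IH; lia.
Qed.

Section Triples.
Variable a : nat.

(* The number of triples (x, y, x + a y) in {1, ..., m}^3. *)
Definition ntriples (m : nat) : nat := \sum_(1 <= y < m.+1) (m - a * y).

Lemma ntriplesE N m : m <= a * N.+1 ->
  \sum_(1 <= y < N.+1) (m - a * y) = ntriples m.
Proof.
move=> hm; rewrite /ntriples.
rewrite (@sum_nat_widen0 _ _ N.+1 (N + m).+1) ?ltnS ?leq_addr //; last first.
  by move=> y /andP[hy _]; apply/eqP; rewrite subn_eq0 (leq_trans hm) // leq_mul2l hy orbT.
rewrite -(@sum_nat_widen0 _ _ m.+1 (N + m).+1) ?ltnS ?leq_addl // => y /andP[hy _].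
apply/eqP; rewrite subn_eq0.
by case: (posnP a) hm => [-> | a_gt0] hm; [rewrite mul0n in hm; lia | nia].
Qed.

Lemma sum_gt_ntriples lo N m : m <= a * N.+1 ->
  \sum_(1 <= y < N.+1) (lo < y) * (m - a * y) = ntriples (m - a * lo).
Proof.
elim: lo N m => [|lo IH] N m hm.
  rewrite muln0 subn0 -(ntriplesE hm).
  by apply: eq_big_nat => y /andP[y_gt0 _]; rewrite y_gt0 mul1n.
case: N hm => [|N] hm.
  rewrite big_geq // /ntriples big_nat_cond big1 // => y /andP[/andP[y_gt0 _] _].
  by apply/eqP; rewrite subn_eq0; nia.
rewrite big_nat_recl //= mul0n add0n mulnS subnDA -(IH N); last by rewrite leq_subLR -mulnS.
by apply: eq_bigr => y _; rewrite ltnS mulnS subnDA.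
Qed.

Lemma sum_le_ntriples s N m : m <= a * N.+1 ->
  \sum_(1 <= y < N.+1) (y <= s) * (m - a * y) = ntriples m - ntriples (m - a * s).
Proof.
move=> hm; have := sum_gt_ntriples 0 hm; rewrite muln0 subn0 => <-.
rewrite -(sum_gt_ntriples s hm) -[X in X - _](@eq_big_nat _ _ _ _ _
  (fun y => (y <= s) * (m - a * y) + (s < y) * (m - a * y))) ?big_split ?addnK //.
by move=> y /andP[y_gt0 _]; rewrite y_gt0 -mulnDl; case: leqP.
Qed.

Lemma ntriplesD m : 0 < a -> ntriples (m + a) = ntriples m + m.
Proof.
move=> a_gt0; rewrite /ntriples big_nat_recl ?addn_gt0 ?a_gt0 ?orbT //.
rewrite muln1 addnK addnC; congr (_ + _).
rewrite -[RHS](ntriplesE (N := m + a - 1)); last by nia.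
have -> : (m + a - 1).+1 = m + a by lia.
by apply: eq_bigr => y _; rewrite mulnS [m + a]addnC subnDl.
Qed.

Lemma leq_ntriples m1 m2 : m1 <= m2 -> ntriples m1 <= ntriples m2.
Proof.
move=> le_m12; rewrite /ntriples (@big_cat_nat _ _ _ m1.+1 1 m2.+1) //=.
by apply: leq_trans (leq_addr _ _); apply: leq_sum => y _; rewrite leq_sub2r.
Qed.

Lemma ntriples_small m : m <= a -> ntriples m = 0.
Proof.
move=> le_ma; rewrite /ntriples big_nat_cond big1 // => y /andP[/andP[y_gt0 _] _].
by apply/eqP; rewrite subn_eq0 (leq_trans le_ma) // leq_pmulr.
Qed.

Lemma sum_pairs_weighted (w : nat -> nat) lo hi n : hi <= n ->
  \sum_(1 <= x < n.+1) \sum_(1 <= y < n.+1) w y * ((lo < x) && (x + a * y <= hi))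
  = \sum_(1 <= y < n.+1) w y * (hi - lo - a * y).
Proof.
move=> le_hi_n; rewrite exchange_big_nat; apply: eq_bigr => y _.
by rewrite -big_distrr /= sum_interval_indicator; congr (_ * _); lia.
Qed.

End Triples.

Local Notation T := (ntriples 4).

Lemma Mnst_small a n s t : n <= a -> Mnst a n s t = 0.
Proof.
move=> le_na; rewrite /Mnst big_nat_cond big1 // => x /andP[/andP[x_gt0 _] _].
rewrite big_nat_cond big1 // => y /andP[/andP[y_gt0 _] _].
by have -> : (x + a * y <= n) = false by nia.
Qed.

Definition Mlower (n s t : nat) : nat :=
  T s + T (t - 5 * s) + (T (n - t) - T (n - t - 4 * s)) + T (n - 5 * t).

Lemma Mnst4_lower n s t : s <= t -> t <= n -> Mlower n s t <= Mnst 4 n s t.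
Proof.
move=> le_st le_tn; rewrite /Mnst.
apply: (@leq_trans (\sum_(1 <= x < n.+1) \sum_(1 <= y < n.+1)
   ((0 < y) * ((0 < x) && (x + 4 * y <= s)) + (s < y) * ((s < x) && (x + 4 * y <= t))
  + (y <= s) * ((t < x) && (x + 4 * y <= n)) + (t < y) * ((t < x) && (x + 4 * y <= n))))).
  under eq_bigr => x _ do rewrite !big_split /=.
  rewrite !big_split /= !sum_pairs_weighted ?(leq_trans le_st le_tn) //.
  rewrite !subn0 (@sum_gt_ntriples _ 0) ?(@sum_gt_ntriples _ s) ?(@sum_gt_ntriples _ t)
          ?sum_le_ntriples ?muln0 ?subn0; [|lia..].
  have -> : t - s - 4 * s = t - 5 * s by lia.
  by have -> : n - t - 4 * t = n - 5 * t by lia.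
rewrite big_nat_cond [X in _ <= X]big_nat_cond; apply: leq_sum => x /andP[hx _].
rewrite big_nat_cond [X in _ <= X]big_nat_cond; apply: leq_sum => y /andP[hy _].
rewrite /mono /red /blue; lia.
Qed.

Lemma Mnst4_upper n s t : 5 * s <= t -> t <= n -> n < 4 * t + 5 ->
  Mnst 4 n s t <= T s + T (t - 5 * s) + T (n - t).
Proof.
move=> h5st le_tn hn; rewrite /Mnst.
apply: (@leq_trans (\sum_(1 <= x < n.+1) \sum_(1 <= y < n.+1)
   ((0 < y) * ((0 < x) && (x + 4 * y <= s)) + (s < y) * ((s < x) && (x + 4 * y <= t))
  + (0 < y) * ((t < x) && (x + 4 * y <= n))))).
  rewrite big_nat_cond [X in _ <= X]big_nat_cond; apply: leq_sum => x /andP[hx _].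
  rewrite big_nat_cond [X in _ <= X]big_nat_cond; apply: leq_sum => y /andP[hy _].
  rewrite /mono /red /blue; lia.
under eq_bigr => x _ do rewrite !big_split /=.
have le_st : s <= t by lia.
rewrite !big_split /= !sum_pairs_weighted ?(leq_trans le_st le_tn) //.
rewrite !subn0 !(@sum_gt_ntriples _ 0) ?(@sum_gt_ntriples _ s) ?muln0 ?subn0; [|lia..].
by have -> : t - s - 4 * s = t - 5 * s by lia.
Qed.

Definition defect4 (m : nat) : nat :=
  if m %% 4 == 0 then 4 else if m %% 4 == 2 then 0 else 1.

Lemma defect4D m : defect4 (m + 4) = defect4 m.
Proof. by rewrite /defect4 modnDr. Qed.

Lemma defect4_le m : defect4 m <= 4.
Proof. by rewrite /defect4; case: ifP => // _; case: ifP. Qed.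

Lemma ntriples4_closed m : 8 * T m + defect4 m + 4 * m = m ^ 2 + 4.
Proof.
elim/ltn_ind: m => m IH; case: (ltnP m 4) => [lt_m4 | le_4m].
  rewrite ntriples_small; last exact: ltnW.
  by case: m lt_m4 {IH} => [|[|[|[|]]]].
have [k def_m] : exists k, m = k + 4 by exists (m - 4); rewrite subnK.
have /IH : k < m by lia.
by rewrite def_m ntriplesD // defect4D sqrnD; lia.
Qed.

Lemma ntriples4_lb m : m ^ 2 <= 8 * T m + 4 * m.
Proof. by move: (ntriples4_closed m) (defect4_le m); lia. Qed.

Lemma ntriples4_addMn d a : T (d + 4 * a) + 2 * a = T d + a * d + 2 * a ^ 2.
Proof.
elim: a => [|a IH]; first by rewrite !muln0 !addn0.
rewrite mulnSr addnA ntriplesD //; move: IH; rewrite !expnS !expn0; nia.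
Qed.

Lemma ntriples_sum_shift a b c :
  T (a + 20) + T (b + 4) + T (c + 4) = T a + T b + T c + (5 * a + b + c) + 40.
Proof.
have -> : a + 20 = a + 4 + 4 + 4 + 4 + 4 by lia.
by rewrite !ntriplesD //; lia.
Qed.

(* [\sum] does not reduce under [vm_compute]; the finite checks below use this
   closed form instead. *)
Definition ntriples4_comp (m : nat) : nat := (m ^ 2 + 4 - 4 * m - defect4 m) %/ 8.

Lemma ntriples4_compE m : ntriples4_comp m = T m.
Proof.
rewrite /ntriples4_comp.
have -> : m ^ 2 + 4 - 4 * m - defect4 m = T m * 8 by move: (ntriples4_closed m); lia.
by rewrite mulnK.
Qed.

Definition quad (n : nat) : nat := n ^ 2 + 245 - 28 * n.

Definition Mval (n : nat) : nat := quad n %/ 216 - (n %% 108 \in I_exc).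

Lemma quadE n : quad n + 28 * n = n ^ 2 + 245.
Proof. by rewrite subnK //; move: (nat_Cauchy n 14).1; lia. Qed.

Lemma quadD108 n : quad (n + 108) = quad n + 216 * (n + 40).
Proof. by move: (quadE n) (quadE (n + 108)); rewrite sqrnD; lia. Qed.

Lemma Mval_small n : n <= 26 -> Mval n = 0.
Proof.
move=> le_n26; apply/eqP.
have /allP : all (fun k => Mval k == 0) (iota 0 27) by [].
by apply; rewrite mem_iota.
Qed.

Lemma exc_le_quot n : (n %% 108 \in I_exc) <= quad n %/ 216.
Proof.
case: (leqP 27 n) => [le_27n | lt_n27].
  apply: leq_trans (_ : 1 <= _); first by case: (_ \in _).
  by rewrite leq_divRL //; move: (quadE n); nia.
have /allP : all (fun k => (k %% 108 \in I_exc) <= quad k %/ 216) (iota 0 27) by [].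
by apply; rewrite mem_iota.
Qed.

Lemma MvalD108 n : Mval (n + 108) = Mval n + n + 40.
Proof.
rewrite /Mval quadD108 divnDr ?dvdn_mulr // mulKn // modnDr.
by move: (exc_le_quot n); lia.
Qed.

Lemma Mval_le L n : quad n <= 216 * L + 215 -> Mval n <= L.
Proof. by move=> hq; rewrite /Mval (leq_trans (leq_subr _ _)) // -ltnS ltn_divLR //; lia. Qed.

Lemma near_diagonal a b c : 216 * (T a + T b + T c) < quad (5 * a + b + c) ->
  a <= 5 * b + 11 /\ 5 * b <= a + 27.
Proof.
move=> hlt; set u := (5 * Z.of_nat b - Z.of_nat a - 8)%Z.
have hu : (u * u < 373)%Z.
  move: (ntriples4_closed a) (ntriples4_closed b) (ntriples4_closed c).
  move: (defect4_le a) (defect4_le b) (defect4_le c) (quadE (5 * a + b + c)).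
  have := Z.square_nonneg (5 * Z.of_nat c - Z.of_nat a - 8).
  have := Z.square_nonneg (Z.of_nat b - Z.of_nat c).
  rewrite /u !expnS !expn0 !muln1; lia.
have : (-19 <= u <= 19)%Z by nia.
rewrite /u; lia.
Qed.

Definition small_triples_check : bool :=
  all (fun a => all (fun b => all (fun c =>
    Mval (5 * a + b + c) <= ntriples4_comp a + ntriples4_comp b + ntriples4_comp c)
  (iota 0 12)) (iota 0 12)) (iota 0 31).

Lemma small_triples_checkP : small_triples_check.
Proof. by vm_compute. Qed.

Lemma Mval_le_ntriples_sum a b c : Mval (5 * a + b + c) <= T a + T b + T c.
Proof.
elim/ltn_ind: a b c => a IH b c.
have [hq | hlt] := leqP (quad (5 * a + b + c)) (216 * (T a + T b + T c)).
  by apply: Mval_le; lia.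
have [hab hba] := near_diagonal hlt.
have [hac hca] : a <= 5 * c + 11 /\ 5 * c <= a + 27.
  by apply: (@near_diagonal a c b); rewrite (addnAC (T a)) (addnAC (5 * a)).
(* Near the diagonal, a >= 31 forces b, c >= 4, so (a, b, c) can be moved
   down by (20, 4, 4). *)
have [lt_a31 | le_31a] := ltnP a 31.
  rewrite -!ntriples4_compE.
  have /allP/(_ a) := small_triples_checkP; rewrite mem_iota => /(_ lt_a31)/allP/(_ b).
  rewrite mem_iota => /(_ ltac:(lia))/allP/(_ c); rewrite mem_iota.
  by apply; lia.
have [a' def_a] : exists a', a = a' + 20 by exists (a - 20); lia.
have [b' def_b] : exists b', b = b' + 4 by exists (b - 4); lia.
have [c' def_c] : exists c', c = c' + 4 by exists (c - 4); lia.
have /IH/(_ b' c') : a' < a by lia.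
have -> : 5 * a + b + c = (5 * a' + b' + c') + 108 by lia.
by rewrite def_a def_b def_c ntriples_sum_shift MvalD108; lia.
Qed.

Section QuadraticBounds.
Local Open Scope Z_scope.

Lemma quad_mid a b c : 0 <= a -> 0 <= b -> 4 * a + 5 <= c <= 20 * a + 4 * b ->
  27 <= 5 * a + b + c ->
  (5 * a + b + c) * (5 * a + b + c) - 28 * (5 * a + b + c) + 30
  <= 27 * (a * a - 4 * a + b * b - 4 * b + 8 * a * c - 16 * a * a - 16 * a).
Proof.
move=> a_ge0 b_ge0 hc hn.
have : 0 <= (c - (4 * a + 5)) * (20 * a + 4 * b - c) by apply: Z.mul_nonneg_nonneg; lia.
nia.
Qed.

Lemma quad_far a b c d : 0 <= a -> 0 <= b -> 0 <= d -> c = 20 * a + 4 * b + d ->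
  27 <= 5 * a + b + c ->
  (5 * a + b + c) * (5 * a + b + c) - 28 * (5 * a + b + c) + 30
  <= 27 * (a * a - 4 * a + b * b - 4 * b + 8 * a * c - 16 * a * a - 16 * a
           + d * d - 4 * d).
Proof.
move=> a_ge0 b_ge0 d_ge0 -> hn.
set x := 2 * b - 5 * d + 16.
(* Twice the difference of the two sides, plus 316. *)
suff : 316 <= 6580 * a * a + 1228 * a * b + 332 * a * d + 320 * a + x * x + 27 * d * d.
  rewrite /x; lia.
have [a0 | a_gt0] : a = 0 \/ 0 < a by lia.
  subst a; have [le_4d | lt_d4] : 4 <= d \/ d < 4 by lia.
    by nia.
  have : 11 <= x by rewrite /x; lia.
  nia.
have := Z.mul_nonneg_nonneg _ _ a_ge0 b_ge0.
have := Z.mul_nonneg_nonneg _ _ a_ge0 d_ge0.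
nia.
Qed.

End QuadraticBounds.

Lemma Mval_le_lower a b c :
  Mval (5 * a + b + c) <= T a + T b + (T c - T (c - 4 * a)) + T (c - 4 * (5 * a + b)).
Proof.
have [le_c | lt_c] := leqP c (4 * a + 4).
  rewrite (@ntriples_small _ (c - 4 * a)) ?(@ntriples_small _ (c - 4 * (5 * a + b)));
    [|lia..].
  by rewrite subn0 addn0 Mval_le_ntriples_sum.
have [le_n26 | lt_n26] := leqP (5 * a + b + c) 26; first by rewrite Mval_small.
apply: Mval_le.
have := ntriples4_addMn (c - 4 * a) a; rewrite subnK; last lia.
move: (ntriples4_lb a) (ntriples4_lb b) (quadE (5 * a + b + c)).
have [le_far | lt_far] := leqP (4 * (5 * a + b)) c.
  have [d def_d] : exists d, d = c - 4 * (5 * a + b) by exists (c - 4 * (5 * a + b)).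
  rewrite -def_d; move: (ntriples4_lb d).
  have := @quad_far (Z.of_nat a) (Z.of_nat b) (Z.of_nat c) (Z.of_nat d).
  rewrite !expnS !expn0 !muln1; lia.
rewrite (@ntriples_small _ (c - 4 * (5 * a + b))); last lia.
have := @quad_mid (Z.of_nat a) (Z.of_nat b) (Z.of_nat c).
rewrite !expnS !expn0 !muln1; lia.
Qed.

Lemma Mval_le_Mlower n s t : s <= t -> t <= n -> Mval n <= Mlower n s t.
Proof.
move=> le_st le_tn; rewrite /Mlower.
have [le_5s_t | lt_t_5s] := leqP (5 * s) t.
  have := Mval_le_lower s (t - 5 * s) (n - t).
  have -> : 5 * s + (t - 5 * s) + (n - t) = n by lia.
  by have -> : n - t - 4 * (5 * s + (t - 5 * s)) = n - 5 * t by lia.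
set s' := t %/ 5.
have hs' : 5 * s' <= t < 5 * s' + 5 by rewrite /s'; lia.
clearbody s'.
have := Mval_le_lower s' (t - 5 * s') (n - t).
have -> : 5 * s' + (t - 5 * s') + (n - t) = n by lia.
have -> : n - t - 4 * (5 * s' + (t - 5 * s')) = n - 5 * t by lia.
rewrite !(@ntriples_small _ (t - 5 * _)); [|lia..].
have : T s' <= T s by apply: leq_ntriples; lia.
have : T (n - t - 4 * s) <= T (n - t - 4 * s') by apply: leq_ntriples; lia.
lia.
Qed.

Lemma witness_shift a b c j : T a + T b + T c <= Mval (5 * a + b + c) ->
  T (a + 20 * j) + T (b + 4 * j) + T (c + 4 * j) <= Mval (5 * a + b + c + 108 * j).
Proof.
move=> hle; elim: j => [|j]; first by rewrite !muln0 !addn0.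
have -> : 5 * a + b + c + 108 * j = 5 * (a + 20 * j) + (b + 4 * j) + (c + 4 * j) by lia.
move=> IH.
have -> : 5 * a + b + c + 108 * j.+1
  = 5 * (a + 20 * j) + (b + 4 * j) + (c + 4 * j) + 108 by lia.
have -> : a + 20 * j.+1 = a + 20 * j + 20 by lia.
have -> : b + 4 * j.+1 = b + 4 * j + 4 by lia.
have -> : c + 4 * j.+1 = c + 4 * j + 4 by lia.
rewrite ntriples_sum_shift MvalD108.
lia.
Qed.

Definition witness_ok (m v a b c : nat) : bool :=
  [&& 0 < a, 5 * a + b + c == m, m < 4 * (5 * a + b) + 5 &
      ntriples4_comp a + ntriples4_comp b + ntriples4_comp c <= v].

Definition witness_exists (m v : nat) : bool :=
  has (fun b => has (fun c => witness_ok m v ((m - b - c) %/ 5) b c) (iota 0 13))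
    (iota 0 10).

Definition witness_check : bool :=
  all (fun m => witness_exists m (Mval m)) (iota 5 108).

Lemma witness_checkP : witness_check.
Proof. by vm_compute. Qed.

Lemma Mval_witness n : 5 <= n -> exists a b c,
  [/\ 0 < a, 5 * a + b + c = n, n < 4 * (5 * a + b) + 5 &
      T a + T b + T c <= Mval n].
Proof.
move=> le_5n; set j := (n - 5) %/ 108; set m := (n - 5) %% 108 + 5.
have def_n : n = m + 108 * j by rewrite /m /j; lia.
have /allP/(_ m) := witness_checkP; rewrite mem_iota => /(_ ltac:(lia)).
clearbody j m.
case/hasP => b _ /hasP[c _]; set a := _ %/ 5; clearbody a.
case/and4P => a_gt0 /eqP def_m hm; rewrite !ntriples4_compE -def_m.
move=> /(witness_shift j); rewrite def_m -def_n => hT.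
by exists (a + 20 * j), (b + 4 * j), (c + 4 * j); split; lia.
Qed.

Lemma bigminn_inf (I : eqType) (r : seq I) (F : I -> nat) x0 i :
  i \in r -> \big[minn/x0]_(j <- r) F j <= F i.
Proof.
elim: r => [|j r IH] //; rewrite big_cons in_cons => /predU1P[<- | /IH].
  exact: geq_minl.
exact: leq_trans (geq_minr _ _).
Qed.

Lemma leq_bigminn (I : eqType) (r : seq I) (F : I -> nat) x0 v :
  v <= x0 -> (forall i, i \in r -> v <= F i) -> v <= \big[minn/x0]_(j <- r) F j.
Proof.
move=> v_le_x0 v_le_F; rewrite big_seq.
by elim/big_ind: _ => // m1 m2 h1 h2; rewrite leq_min h1.
Qed.

Lemma Mmin_le a n s t : 1 <= s -> s <= t -> t <= n -> Mmin a n <= Mnst a n s t.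
Proof.
move=> s_gt0 le_st le_tn; rewrite /Mmin.
apply: leq_trans (bigminn_inf _ _ (i := s) _) _; first by rewrite mem_index_iota; lia.
by apply: bigminn_inf; rewrite mem_index_iota; lia.
Qed.

Lemma Mmin_ge a n v : v <= Mnst a n 1 1 ->
  (forall s t, 1 <= s -> s <= t -> t <= n -> v <= Mnst a n s t) -> v <= Mmin a n.
Proof.
move=> v_le1 v_le; apply: leq_bigminn => // s; rewrite mem_index_iota => hs.
by apply: leq_bigminn => // t; rewrite mem_index_iota => ht; apply: v_le; lia.
Qed.

Theorem theorem4p4 (n : nat) : 1 <= n ->
  Mmin 4 n = (n ^ 2 + 245 - 28 * n) %/ 216 - ((n %% 108) \in I_exc).
Proof.
move=> n_gt0; rewrite -/(quad n) -/(Mval n).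
have lower s t : 1 <= s -> s <= t -> t <= n -> Mval n <= Mnst 4 n s t.
  by move=> _ le_st le_tn; apply: leq_trans (Mval_le_Mlower le_st le_tn) (Mnst4_lower le_st le_tn).
apply/eqP; rewrite eqn_leq (Mmin_ge (lower 1 1 _ _ _) lower) // andbT.
have [le_n4 | lt_4n] := leqP n 4.
  rewrite Mval_small ?(leq_trans le_n4) //.
  by apply: leq_trans (@Mmin_le 4 n 1 1 _ _ _) _; rewrite ?Mnst_small.
have [a [b [c [a_gt0 def_n hn hT]]]] := Mval_witness lt_4n.
apply: leq_trans (@Mmin_le 4 n a (5 * a + b) a_gt0 _ _) _; [lia | lia |].
apply: leq_trans (Mnst4_upper _ _ _) _; [lia | lia | lia |].
by rewrite addKn -{1}def_n addKn.
Qed.
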